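(* Let $\mathcal{X}$ be finite and let $V_n:\mathcal{X}^n\rightsquigarrow\mathcal{Y}_n$ ($\mathcal{Y}_n$ countable) be a channel sequence, with $\overline{p}_n$ a distribution on $\mathcal{X}^n$ attaining $\mathbf{I}(V_n)=\max_p\mathbf{I}(V_n,p)$. Let $\varphi_n=-\log_2\inf\big(\{V_n(y|x)\}_{x,y}\setminus\{0\}\big)\ge0$. For a sequence $\delta_n\in[0,1]$ define $\hat p_n(x)=(1-\delta_n)\overline{p}_n(x)+\delta_n/|\mathcal{X}|^n$. Then $\mathbf{I}(V_n)-\mathbf{I}(V_n,\hat p_n)=O(\delta_n(n+\varphi_n))$. In particular, if $\delta_n=o(1/\varphi_n)$ and $\delta_n=o(1)$, and the limit $\mathbf{I}(V)=\lim_n\mathbf{I}(V_n)/n$ exists, then $\lim_{n\to\infty}\mathbf{I}(V_n,\hat p_n)/n=\mathbf{I}(V)$; and if $\delta_n=o(1/\varphi_n)$ and $\delta_n=o(1/n)$, then $\lim_{n\to\infty}[\mathbf{I}(V_n)-\mathbf{I}(V_n,\hat p_n)]=0$.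
   Context: A channel $W:\mathcal{A}\rightsquigarrow\mathcal{B}$ is a family of probability distributions $W(\cdot|a)$ on $\mathcal{B}$. For a distribution $p$: $p\bullet W(b)=\sum_a p(a)W(b|a)$; $\mathbf{i}(W,p,a,b)=\log_2\frac{W(b|a)}{p\bullet W(b)}$ if $W(b|a)>0$ and $p\bullet W(b)>0$, else $0$; $\mathbf{I}(W,p)=\sum_{a,b}p(a)W(b|a)\mathbf{i}(W,p,a,b)$, $\mathbf{I}(W)=\max_p\mathbf{I}(W,p)$. $a_n=O(b_n)$ means $|a_n|\le Cb_n$ for some constant $C$ and all large $n$; $a_n=o(b_n)$ means $a_n/b_n\to0$. *)

From mathcomp Require Import all_boot all_order all_algebra.
From mathcomp Require Import all_classical all_reals all_analysis.
Set Implicit Arguments. Unset Strict Implicit. Unset Printing Implicit Defensive.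
Import Order.TTheory GRing.Theory Num.Theory numFieldNormedType.Exports.
Local Open Scope classical_set_scope.
Local Open Scope ring_scope.

(* Output alphabets: a countable alphabet is encoded into nat (letters outside
   the image get probability 0).  Input alphabet A is finite.
   A channel W : A ~> nat is W a b = W(b|a). *)

Section Info.
Variable R : realType.
Variable A : finType.

Definition log2 (x : R) : R := ln x / ln 2.

Definition is_distr (p : A -> R) : Prop :=
  (forall a, 0 <= p a) /\ \sum_(a : A) p a = 1.

Definition is_channel (W : A -> nat -> R) : Prop :=
  (forall a b, 0 <= W a b) /\
  (forall a, (fun N => \sum_(b < N) W a b) @ \oo --> (1 : R)).

Definition outd (W : A -> nat -> R) (p : A -> R) (b : nat) : R :=
  \sum_(a : A) p a * W a b.

Definition idens (W : A -> nat -> R) (p : A -> R) (a : A) (b : nat) : R :=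
  if (0 < W a b) && (0 < outd W p b) then log2 (W a b / outd W p b) else 0.

Definition minfo (W : A -> nat -> R) (p : A -> R) : R :=
  limn (fun N : nat => \sum_(b < N) \sum_(a : A) p a * W a b * idens W p a b).

Definition minpos (W : A -> nat -> R) : R :=
  inf [set r : R | exists a b, r = W a b /\ W a b != 0].

Definition phiW (W : A -> nat -> R) : \bar R :=
  if 0 < minpos W then (- log2 (minpos W))%:E else +oo%E.

End Info.

From mathcomp Require Import all_boot all_order all_algebra.
From mathcomp Require Import all_classical all_reals all_analysis.
From mathcomp Require Import ring lra.
Set Implicit Arguments. Unset Strict Implicit. Unset Printing Implicit Defensive.
Import Order.TTheory GRing.Theory Num.Theory numFieldNormedType.Exports.
Local Open Scope classical_set_scope.
Local Open Scope ring_scope.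

(* Mutual information is concave in the input distribution and nonnegative, so
   mixing a maximiser [pbar] with weight [delta] into the uniform distribution
   keeps at least [(1 - delta) I(V_n)]; since [I(V_n) <= H(pbar) <= n log2 |X|],
   the loss is at most [delta n log2 |X|].  This bound does not involve [phi_n]. *)

Section RealFacts.
Variable R : realType.

Lemma ln2_gt0 : 0 < ln (2 : R).
Proof. by apply: ln_gt0; rewrite ltr1n. Qed.

(* [ln t <= t - 1] at [t = z / x], multiplied by [x]. *)
Lemma subr_le_mul_lnB (x z : R) : 0 <= x -> 0 < z -> x - z <= x * (ln x - ln z).
Proof.
move=> x0 z0; have [->|xn0] := eqVneq x 0; first by rewrite mul0r sub0r oppr_le0 ltW.
have xp : 0 < x by rewrite lt_def xn0 x0.
have : ln (z / x) <= z / x - 1.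
  by rewrite -[X in ln X](addrNK 1) addrC le_ln1Dx // ltrBrDl subrr divr_gt0.
rewrite ln_div ?posrE // => /(ler_wpM2l x0).
rewrite !mulrBr mulr1 mulrCA divff // mulr1; lra.
Qed.

Lemma xlnx_convex (l x y : R) : 0 <= l <= 1 -> 0 <= x -> 0 <= y ->
  (l * x + (1 - l) * y) * ln (l * x + (1 - l) * y)
    <= l * (x * ln x) + (1 - l) * (y * ln y).
Proof.
move=> /andP[l0 l1] x0 y0; have l1' : 0 <= 1 - l by rewrite subr_ge0.
set z := l * x + (1 - l) * y.
have [z0|zn0] := eqVneq z 0.
  move/eqP: (z0); rewrite paddr_eq0 ?mulr_ge0 // => /andP[/eqP lx0 /eqP ly0].
  by rewrite z0 mul0r !mulrA lx0 ly0 !mul0r addr0.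
have zp : 0 < z by rewrite lt_def zn0 addr_ge0 ?mulr_ge0.
have := ler_wpM2l l0 (subr_le_mul_lnB x0 zp).
have := ler_wpM2l l1' (subr_le_mul_lnB y0 zp).
have -> : z * ln z = l * x * ln z + (1 - l) * y * ln z by rewrite /z; ring.
have : l * (x - z) + (1 - l) * (y - z) = 0 by rewrite /z; ring.
rewrite !mulrBr !mulrA; lra.
Qed.

Lemma cvg0_squeeze (u v : nat -> R) (c : R) :
  (forall n, 0 <= u n <= c * v n) -> v @ \oo --> 0 -> u @ \oo --> 0.
Proof.
move=> uv v0; apply: (@squeeze_cvgr _ _ _ _ (fun=> 0) (fun n => c * v n)).
- exact: nearW.
- exact: cvg_cst.
- by rewrite -(mulr0 c); apply: cvgMr.
Qed.

Lemma cvg0_divn (u v : nat -> R) (c : R) : 0 <= c -> (forall n, 0 <= v n) ->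
  (forall n, 0 <= u n <= c * (n%:R * v n)) -> v @ \oo --> 0 ->
  (fun n => u n / n%:R) @ \oo --> 0.
Proof.
move=> c0 v0 uv v_cvg0; apply: (cvg0_squeeze (c := c) _ v_cvg0) => n.
have [->|n_gt0] := posnP n; first by rewrite invr0 mulr0 lexx mulr_ge0 ?v0.
have /andP[u0 u_le] := uv n.
by rewrite divr_ge0 ?ler_pdivrMr ?ltr0n //= -mulrA [v n * _]mulrC.
Qed.

End RealFacts.

Section Distributions.
Variables (R : realType) (A : finType).
Implicit Types p : A -> R.

Definition mixd (l : R) (p1 p2 : A -> R) a := l * p1 a + (1 - l) * p2 a.

Lemma is_distr_mix (l : R) p1 p2 : is_distr p1 -> is_distr p2 -> 0 <= l <= 1 ->
  is_distr (mixd l p1 p2).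
Proof.
move=> [p10 p11] [p20 p21] /andP[l0 l1]; split.
  by move=> a; rewrite /mixd addr_ge0 ?mulr_ge0 ?subr_ge0.
by rewrite /mixd big_split /= -!mulr_sumr p11 p21 !mulr1 addrC subrK.
Qed.

Lemma is_distr_card_gt0 p : is_distr p -> (0 < #|A|)%N.
Proof.
move=> [_ p1]; rewrite lt0n; apply/negP => /eqP/card0_eq A0.
by move: p1; rewrite big_pred0 // => /esym/eqP; rewrite oner_eq0.
Qed.

Lemma is_distr_uniform : (0 < #|A|)%N -> is_distr (fun _ : A => (#|A|%:R : R)^-1).
Proof.
move=> A0; split; first by move=> a; rewrite invr_ge0.
by rewrite sumr_const -[_^-1 *+ _]mulr_natr mulVf // pnatr_eq0 -lt0n.
Qed.

Lemma entropy_le_ln_card p : is_distr p -> \sum_(a : A) p a * - ln (p a) <= ln #|A|%:R.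
Proof.
move=> dp; have A0 : (0 < (#|A|%:R : R)) by rewrite ltr0n (is_distr_card_gt0 dp).
have [p0 p1] := dp.
have term a : p a * - ln (p a) <= p a * ln #|A|%:R + (#|A|%:R)^-1 - p a.
  have Ai : 0 < (#|A|%:R : R)^-1 by rewrite invr_gt0.
  have := subr_le_mul_lnB (p0 a) Ai.
  by rewrite lnV ?posrE // mulrBr mulrN opprK mulrN; lra.
apply: (le_trans (ler_sum _ (fun a _ => term a))).
rewrite sumrB big_split /= -mulr_suml p1 mul1r sumr_const -[_^-1 *+ _]mulr_natr.
by rewrite mulVf ?gt_eqF // addrK.
Qed.

End Distributions.

Section Channel.
Variables (R : realType) (A : finType) (W : A -> nat -> R).
Hypothesis W_ge0 : forall a b, 0 <= W a b.
Hypothesis W_partial_le1 : forall a N, \sum_(b < N) W a b <= 1.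
Implicit Types p : A -> R.

(* The contribution of the output letter [b] to [minfo W p], in nats; the
   terms that [idens] sets to [0] vanish here anyway. *)
Definition out_info p (b : nat) : R :=
  \sum_(a : A) p a * W a b * (ln (W a b) - ln (outd W p b)).

Lemma outd_ge0 p b : (forall a, 0 <= p a) -> 0 <= outd W p b.
Proof. by move=> p0; apply: sumr_ge0 => a _; rewrite mulr_ge0. Qed.

Lemma mulr_le_outd p a b : (forall a, 0 <= p a) -> p a * W a b <= outd W p b.
Proof.
move=> p0; rewrite /outd (bigD1 a) //= lerDl.
by apply: sumr_ge0 => i _; rewrite mulr_ge0.
Qed.

Lemma sum_idensE p b : (forall a, 0 <= p a) ->
  \sum_(a : A) p a * W a b * idens W p a b = out_info p b / ln 2.
Proof.
move=> p0; rewrite /out_info mulr_suml; apply: eq_bigr => a _.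
rewrite /idens; case: ifP => [/andP[Wp qp]|].
  by rewrite /log2 ln_div ?posrE // mulrA.
move=> /negbT; rewrite negb_and -!leNgt => /orP[W0|q0].
  have -> : W a b = 0 by apply/eqP; rewrite eq_le W0 W_ge0.
  by rewrite !(mulr0, mul0r).
suff -> : p a * W a b = 0 by rewrite !mul0r.
by apply/eqP; rewrite eq_le mulr_ge0 // (le_trans (mulr_le_outd _ _ p0)).
Qed.

Lemma out_info_ge0 p b : is_distr p -> 0 <= out_info p b.
Proof.
move=> [p0 p1]; have [q0|qn0] := eqVneq (outd W p b) 0.
  rewrite /out_info big1 // => a _.
  suff -> : p a * W a b = 0 by rewrite mul0r.
  by apply/eqP; rewrite eq_le mulr_ge0 // -q0 (mulr_le_outd _ _ p0).
have qp : 0 < outd W p b by rewrite lt_def qn0 outd_ge0.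
have <- : \sum_(a : A) p a * (W a b - outd W p b) = 0.
  under eq_bigr do rewrite mulrBr.
  by rewrite sumrB -mulr_suml p1 mul1r subrr.
apply: ler_sum => a _; rewrite -mulrA; apply: ler_wpM2l => //.
exact: subr_le_mul_lnB.
Qed.

Lemma out_infoE p b : out_info p b =
  \sum_(a : A) p a * W a b * ln (W a b) - outd W p b * ln (outd W p b).
Proof.
rewrite /out_info /outd mulr_suml -sumrB.
by apply: eq_bigr => a _; rewrite mulrBr.
Qed.

Lemma out_info_concave (l : R) p1 p2 b :
  (forall a, 0 <= p1 a) -> (forall a, 0 <= p2 a) -> 0 <= l <= 1 ->
  l * out_info p1 b + (1 - l) * out_info p2 b <= out_info (mixd l p1 p2) b.
Proof.
move=> p10 p20 l01.
have outd_mix : outd W (mixd l p1 p2) b = l * outd W p1 b + (1 - l) * outd W p2 b.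
  by rewrite /outd /mixd !mulr_sumr -big_split /=; apply: eq_bigr => a _; ring.
have linear_mix : \sum_(a : A) mixd l p1 p2 a * W a b * ln (W a b) =
    l * \sum_(a : A) p1 a * W a b * ln (W a b) +
    (1 - l) * \sum_(a : A) p2 a * W a b * ln (W a b).
  by rewrite /mixd !mulr_sumr -big_split /=; apply: eq_bigr => a _; ring.
have := xlnx_convex l01 (outd_ge0 b p10) (outd_ge0 b p20).
rewrite !out_infoE linear_mix outd_mix; lra.
Qed.

Lemma out_info_term_le p a b : (forall a, 0 <= p a) ->
  p a * W a b * (ln (W a b) - ln (outd W p b)) <= p a * W a b * - ln (p a).
Proof.
move=> p0; have [->|pWn0] := eqVneq (p a * W a b) 0; first by rewrite !mul0r.
have pWp : 0 < p a * W a b by rewrite lt_def pWn0 mulr_ge0.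
have Wp : 0 < W a b by rewrite lt_def W_ge0 andbT; apply: contraNneq pWn0 => ->; rewrite mulr0.
have pp : 0 < p a by rewrite lt_def p0 andbT; apply: contraNneq pWn0 => ->; rewrite mul0r.
have qp : 0 < outd W p b := lt_le_trans pWp (mulr_le_outd _ _ p0).
rewrite ler_pM2l //.
have : ln (p a * W a b) <= ln (outd W p b) by rewrite ler_ln ?posrE // mulr_le_outd.
rewrite lnM ?posrE //; lra.
Qed.

Lemma sum_out_info_le_entropy p N : is_distr p ->
  \sum_(b < N) out_info p b <= \sum_(a : A) p a * - ln (p a).
Proof.
move=> [p0 p1].
apply: (@le_trans _ _ (\sum_(b < N) \sum_(a : A) p a * W a b * - ln (p a))).
  by apply: ler_sum => b _; apply: ler_sum => a _; apply: out_info_term_le.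
rewrite exchange_big /=; apply: ler_sum => a _.
under eq_bigr do rewrite mulrAC.
rewrite -mulr_sumr; apply: ler_piMr; last exact: W_partial_le1.
by rewrite mulr_ge0 // oppr_ge0 ln_le0 // -p1 (bigD1 a) //= lerDl sumr_ge0.
Qed.

Definition partial_info p (N : nat) : R := \sum_(b < N) out_info p b / ln 2.

Lemma minfoE p : (forall a, 0 <= p a) -> minfo W p = limn (partial_info p).
Proof.
move=> p0; rewrite /minfo /partial_info; congr (lim (_ @ \oo)); apply: funext => N.
by apply: eq_bigr => b _; rewrite sum_idensE.
Qed.

Lemma partial_info_ge0 p N : is_distr p -> 0 <= partial_info p N.
Proof.
move=> dp; rewrite /partial_info sumr_ge0 // => b _.
by rewrite divr_ge0 ?out_info_ge0 ?ltW ?ln2_gt0.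
Qed.

Lemma partial_info_le_log2_card p N : is_distr p -> partial_info p N <= log2 #|A|%:R.
Proof.
move=> dp; rewrite /partial_info /log2 -mulr_suml ler_pM2r ?invr_gt0 ?ln2_gt0 //.
exact: le_trans (sum_out_info_le_entropy N dp) (entropy_le_ln_card dp).
Qed.

Lemma is_cvg_partial_info p : is_distr p -> cvgn (partial_info p).
Proof.
move=> dp; apply: nondecreasing_is_cvgn.
  apply/nondecreasing_seqP => n; rewrite /partial_info big_ord_recr /= lerDl.
  by rewrite divr_ge0 ?out_info_ge0 ?ltW ?ln2_gt0.
by exists (log2 #|A|%:R) => _ [N _ <-]; apply: partial_info_le_log2_card.
Qed.

Lemma minfo_ge0 p : is_distr p -> 0 <= minfo W p.
Proof.
move=> dp; rewrite minfoE; last by case: dp.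
by apply: limr_ge; [exact: is_cvg_partial_info | apply: nearW => N; apply: partial_info_ge0].
Qed.

Lemma minfo_le_log2_card p : is_distr p -> minfo W p <= log2 #|A|%:R.
Proof.
move=> dp; rewrite minfoE; last by case: dp.
apply: limr_le; first exact: is_cvg_partial_info.
by apply: nearW => N; apply: partial_info_le_log2_card.
Qed.

Lemma minfo_concave (l : R) p1 p2 : is_distr p1 -> is_distr p2 -> 0 <= l <= 1 ->
  l * minfo W p1 + (1 - l) * minfo W p2 <= minfo W (mixd l p1 p2).
Proof.
move=> d1 d2 l01; have dm := is_distr_mix d1 d2 l01.
rewrite (minfoE d1.1) (minfoE d2.1) (minfoE dm.1).
have mix_cvg : (fun N => l * partial_info p1 N + (1 - l) * partial_info p2 N) @ \oo
    --> l * limn (partial_info p1) + (1 - l) * limn (partial_info p2).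
  by apply: cvgD; apply: cvgMr; apply: is_cvg_partial_info.
apply: ler_cvg_to mix_cvg (is_cvg_partial_info dm) _.
apply: nearW => N; rewrite /partial_info -!mulr_suml !mulrA -mulrDl.
rewrite ler_pM2r ?invr_gt0 ?ln2_gt0 // !mulr_sumr -big_split ler_sum // => b _.
by apply: out_info_concave => //; [case: d1 | case: d2].
Qed.

End Channel.

Section MaximiserMixing.
Variables (R : realType) (A : finType) (W : A -> nat -> R).
Hypothesis W_channel : is_channel W.

Lemma channel_partial_le1 a N : \sum_(b < N) W a b <= 1.
Proof.
have [_ /(_ a) Wa1] := W_channel.
have nd : nondecreasing_seq (fun N => \sum_(b < N) W a b).
  by apply/nondecreasing_seqP => n; rewrite big_ord_recr /= lerDl W_channel.1.
have := nondecreasing_cvgn_le nd (cvgP _ Wa1) N.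
by rewrite (cvg_lim _ Wa1).
Qed.

Lemma channel_le1 a b : W a b <= 1.
Proof.
apply: le_trans (channel_partial_le1 a b.+1).
by rewrite big_ord_recr /= lerDr sumr_ge0 // => i _; apply: W_channel.1.
Qed.

Lemma phiW_ge0 : (0 <= phiW W)%E.
Proof.
rewrite /phiW; case: ifP => [mp|_]; last exact: le0y.
rewrite lee_fin oppr_ge0 /log2 pmulr_lle0 ?invr_gt0 ?ln2_gt0 // ln_le0 //.
set S := [set r : R | exists a b, r = W a b /\ W a b != 0].
have [s Ss] : S !=set0.
  by apply/set0P; apply: contraTneq mp => S0; rewrite /minpos -/S S0 inf0 ltxx.
have Slb : has_lbound S by exists 0 => r [a [b [-> _]]]; apply: W_channel.1.
apply: le_trans (ge_inf Slb Ss) _.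
by case: Ss => a [b [-> _]]; apply: channel_le1.
Qed.

Lemma minfo_uniform_mix_gap (pbar : A -> R) (d : R) :
  is_distr pbar -> (forall p, is_distr p -> minfo W p <= minfo W pbar) -> 0 <= d <= 1 ->
  0 <= minfo W pbar - minfo W (fun x => (1 - d) * pbar x + d / #|A|%:R)
    <= d * log2 #|A|%:R.
Proof.
move=> dp pbar_max /andP[d0 d1].
have du := is_distr_uniform R (is_distr_card_gt0 dp).
have l01 : 0 <= 1 - d <= 1 by apply/andP; split; lra.
have -> : (fun x => (1 - d) * pbar x + d / #|A|%:R) = mixd (1 - d) pbar (fun=> #|A|%:R^-1).
  by apply: funext => x; rewrite /mixd; congr (_ + _); ring.
have W0 := W_channel.1; have W1 := channel_partial_le1.
have dm := is_distr_mix dp du l01.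
have := minfo_concave W0 W1 dp du l01.
have := minfo_ge0 W0 W1 du; have := minfo_le_log2_card W0 W1 dp.
have := pbar_max _ dm; nra.
Qed.

End MaximiserMixing.

Lemma minfo_uniform_mix_gap_block (R : realType) (X : finType) (n : nat)
    (W : {ffun 'I_n -> X} -> nat -> R) (pbar : {ffun 'I_n -> X} -> R) (d : R) :
  (0 < #|X|)%N -> is_channel W -> is_distr pbar ->
  (forall p, is_distr p -> minfo W p <= minfo W pbar) -> 0 <= d <= 1 ->
  0 <= minfo W pbar - minfo W (fun x => (1 - d) * pbar x + d / (#|X|%:R ^+ n))
    <= log2 #|X|%:R * (n%:R * d).
Proof.
move=> X0 Wch dp pbar_max d01.
have -> : log2 #|X|%:R * (n%:R * d) = d * log2 (#|X|%:R ^+ n).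
  by rewrite /log2 lnXn ?ltr0n // -mulr_natl; ring.
have := minfo_uniform_mix_gap Wch dp pbar_max d01.
by rewrite card_ffun card_ord natrX.
Qed.

Lemma EFin_le_mulD (R : realType) (c d x : R) (y : \bar R) :
  0 <= c -> 0 <= d -> (0 <= y)%E ->
  ((c * (x * d))%:E <= c%:E * (d%:E * (x%:E + y)))%E.
Proof.
move=> c0 d0 y0; rewrite [x * d]mulrC !EFinM.
by apply: lee_wpmul2l; rewrite ?lee_fin //; apply: lee_wpmul2l; rewrite ?lee_fin ?leeDl.
Qed.

Theorem proposition8 (R : realType) (X : finType)
  (V : forall n : nat, {ffun 'I_n -> X} -> nat -> R)
  (pbar : forall n : nat, {ffun 'I_n -> X} -> R)
  (delta : nat -> R) :
  (forall n, is_channel (V n)) ->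
  (forall n, is_distr (pbar n)) ->
  (forall n (p : {ffun 'I_n -> X} -> R), is_distr p ->
      minfo (V n) p <= minfo (V n) (pbar n)) ->
  (forall n, 0 <= delta n <= 1) ->
  let phat := fun n (x : {ffun 'I_n -> X}) =>
      (1 - delta n) * pbar n x + delta n / (#|X|%:R ^+ n) in
  (exists C : R, \forall n \near \oo,
      ((`|minfo (V n) (pbar n) - minfo (V n) (phat n)|)%:E
        <= C%:E * ((delta n)%:E * ((n%:R)%:E + phiW (V n))))%E)
  /\
  ((fun n => ((delta n)%:E * phiW (V n))%E) @ \oo --> 0%E ->
   delta @ \oo --> (0 : R) ->
   forall IV : R,
   (fun n : nat => minfo (V n) (pbar n) / n%:R) @ \oo --> IV ->
   (fun n : nat => minfo (V n) (phat n) / n%:R) @ \oo --> IV)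
  /\
  ((fun n => ((delta n)%:E * phiW (V n))%E) @ \oo --> 0%E ->
   (fun n : nat => n%:R * delta n) @ \oo --> (0 : R) ->
   (fun n : nat => minfo (V n) (pbar n) - minfo (V n) (phat n)) @ \oo --> (0 : R)).
Proof.
move=> Vch dp pbar_max delta01 phat.
have X_gt0 : (0 < #|X|)%N.
  by have := is_distr_card_gt0 (dp 1%N); rewrite card_ffun card_ord expn1.
pose K : R := log2 #|X|%:R.
have K_ge0 : 0 <= K.
  by apply: divr_ge0; [apply: ln_ge0; rewrite ler1n | exact: ltW (ln2_gt0 R)].
have delta_ge0 n : 0 <= delta n by case/andP: (delta01 n).
set D := fun n => minfo (V n) (pbar n) - minfo (V n) (phat n).
have gap n : 0 <= D n <= K * (n%:R * delta n).
  exact: minfo_uniform_mix_gap_block X_gt0 (Vch n) (dp n) (@pbar_max n) (delta01 n).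
split; [|split].
- exists K; apply: nearW => n; have /andP[D_ge0 D_le] := gap n.
  rewrite -/(D n) ger0_norm //.
  apply: le_trans (EFin_le_mulD n%:R K_ge0 (delta_ge0 n) (phiW_ge0 (Vch n))).
  by rewrite lee_fin.
- move=> _ delta0 IV pbar_cvg.
  have -> : (fun n => minfo (V n) (phat n) / n%:R) =
            (fun n => minfo (V n) (pbar n) / n%:R - D n / n%:R).
    by apply: funext => n; rewrite /D mulrBl opprB addrC subrK.
  by rewrite -[IV]subr0; apply: cvgB => //; apply: cvg0_divn K_ge0 delta_ge0 gap delta0.
- by move=> _ ndelta0; apply: cvg0_squeeze gap ndelta0.
Qed.
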